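(* Let $h\colon R\to R'$ be a homomorphism of commutative rings with unit and let $M$ be an at most countable set of monic polynomials in $R[q]$. If $h$ is injective (resp. surjective), then so is the homomorphism $h_M\colon R[q]^M\to R'[q]^{h(M)}$ induced by the map $h_q\colon R[q]\to R'[q]$ obtained by applying $h$ to coefficients.
   Context: $q$ is an indeterminate. For a set $M$ of monic polynomials in $R[q]$, $M^*$ is the multiplicative set generated by $M$, directed by divisibility, and $R[q]^M=\varprojlim_{f\in M^*}R[q]/(f)$. $h(M)=\{h_q(f):f\in M\}$. *)

From HB Require Import structures.
From mathcomp Require Import all_boot all_order all_algebra.
From Stdlib Require Import ClassicalEpsilon.
Set Implicit Arguments. Unset Strict Implicit. Unset Printing Implicit Defensive.
Import GRing.Theory.
Local Open Scope ring_scope.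

Definition at_most_countable (T : Type) (M : T -> Prop) : Prop :=
  exists e : T -> nat, forall p q, M p -> M q -> e p = e q -> p = q.

Definition Mstar (R : comNzRingType) (M : {poly R} -> Prop) (f : {poly R}) : Prop :=
  exists s : seq {poly R}, (forall p, p \in s -> M p) /\ f = \prod_(p <- s) p.

Definition pdivides (R : comNzRingType) (f g : {poly R}) : Prop :=
  exists k : {poly R}, g = k * f.

(* Elements of R[q]^M = lim_{f in M*} R[q]/(f).  Since every f in M* is monic,
   R[q]/(f) is represented by the canonical remainders (polynomials of size
   < size f); the transition map R[q]/(g) -> R[q]/(f) for f | g is reduction
   mod f.  A family x is encoded as a function {poly R} -> {poly R}, with the
   (irrelevant) values outside M* fixed to 0. *)
Definition in_limit (R : comNzRingType) (M : {poly R} -> Prop)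
    (x : {poly R} -> {poly R}) : Prop :=
  (forall f, ~ Mstar M f -> x f = 0) /\
  (forall f, Mstar M f -> (size (x f) < size f)%N) /\
  (forall f g, Mstar M f -> Mstar M g -> pdivides f g ->
     Pdiv.Ring.rmodp (x g) f = x f).

Definition image_set (R R' : comNzRingType) (h : {rmorphism R -> R'})
    (M : {poly R} -> Prop) : {poly R'} -> Prop :=
  fun g => exists f, M f /\ g = map_poly h f.

(* h_M : R[q]^M -> R'[q]^{h(M)}: the component at g = h_q(f), f in M*, is the
   class of h_q(x_f) mod g (independent of the choice of f). *)
Definition hM (R R' : comNzRingType) (h : {rmorphism R -> R'})
    (M : {poly R} -> Prop) (x : {poly R} -> {poly R}) (g : {poly R'}) : {poly R'} :=
  match excluded_middle_informative
          (exists f, Mstar M f /\ map_poly h f = g) with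
  | left H => Pdiv.Ring.rmodp (map_poly h (x (proj1_sig (constructive_indefinite_description _ H)))) g
  | right _ => 0
  end.

From HB Require Import structures.
From mathcomp Require Import all_boot all_order all_algebra.
From Stdlib Require Import ClassicalEpsilon FunctionalExtensionality.
Set Implicit Arguments. Unset Strict Implicit. Unset Printing Implicit Defensive.
Import GRing.Theory Pdiv.Ring Pdiv.RingMonic.
Local Open Scope ring_scope.

(* Since f is monic and deg x_f < deg f, the component of h_M(x) at h_q(f) is
   h_q(x_f); injectivity of h therefore passes to h_M.  For surjectivity,
   countability of M gives a cofinal chain G_0 | G_1 | ... in M*, so an element
   of R[q]^M is determined by a sequence (x_n) compatible modulo the G_n.  Such
   a sequence over y is built step by step: lift y_{n+1} coefficientwise and
   correct the lift by an element of ker h_q so that it agrees with x_n modulo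
   G_n. *)

Section MonicRemainder.
Variable R : comNzRingType.
Implicit Types d f g k p : {poly R}.

Lemma pdivides_trans f g k : pdivides f g -> pdivides g k -> pdivides f k.
Proof. by move=> [a ->] [b ->]; exists (b * a); rewrite mulrA. Qed.

Lemma rmodp_rmodp_pdivides d f p :
  d \is monic -> f \is monic -> pdivides f d -> rmodp (rmodp p d) f = rmodp p f.
Proof.
move=> md mf [k dkf].
rewrite {2}(rdivp_eq md p) rmodpD // [in X in rmodp (_ * X)]dkf mulrA.
by rewrite rmodp_mull // add0r.
Qed.

End MonicRemainder.

Section MapPoly.
Variables (R R' : comNzRingType) (h : {rmorphism R -> R'}).
Implicit Types d f g p : {poly R}.

Lemma size_map_poly_monic p : p \is monic -> size (map_poly h p) = size p.
Proof. by move=> /monicP mp; apply: size_map_poly_id0; rewrite mp rmorph1 oner_neq0. Qed.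

Lemma size_map_poly_le p : (size (map_poly h p) <= size p)%N.
Proof. exact: size_poly. Qed.

Lemma map_rmodp d p :
  d \is monic -> map_poly h (rmodp p d) = rmodp (map_poly h p) (map_poly h d).
Proof.
move=> md; rewrite {2}(rdivp_eq md p) rmorphD rmorphM /= rmodp_addl_mul_small //.
  exact: monic_map.
rewrite (size_map_poly_monic md); apply: leq_ltn_trans (size_map_poly_le _) _.
exact/ltn_rmodpN0/monic_neq0.
Qed.

Lemma pdivides_map f g : pdivides f g -> pdivides (map_poly h f) (map_poly h g).
Proof. by move=> [k ->]; exists (map_poly h k); rewrite rmorphM. Qed.

Lemma map_polyK (lift : R' -> R) : cancel lift h -> cancel (map_poly lift) (map_poly h).
Proof.
move=> liftK p; rewrite -map_poly_comp map_poly_id // => a _ /=; exact: liftK.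
Qed.

End MapPoly.

Section MultiplicativeSet.
Variables (R : comNzRingType) (M : {poly R} -> Prop).

Lemma Mstar1 : Mstar M 1.
Proof. by exists [::]; rewrite big_nil. Qed.

Lemma Mstar_mul f g : Mstar M f -> Mstar M g -> Mstar M (f * g).
Proof.
move=> [s [Ms ->]] [t [Mt ->]]; exists (s ++ t); split; last by rewrite big_cat.
by move=> p; rewrite mem_cat => /orP [/Ms|/Mt].
Qed.

Lemma Mstar_prod (I : Type) (r : seq I) (F : I -> {poly R}) :
  (forall i, Mstar M (F i)) -> Mstar M (\prod_(i <- r) F i).
Proof. by move=> MF; apply: big_ind => //; [exact: Mstar1 | exact: Mstar_mul]. Qed.

Lemma Mstar_mem f : M f -> Mstar M f.
Proof. by move=> Mf; exists [:: f]; rewrite big_seq1; split => // p /[!inE] /eqP ->. Qed.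

Lemma Mstar_monic f : (forall p, M p -> p \is monic) -> Mstar M f -> f \is monic.
Proof. by move=> Mmonic [s [Ms ->]]; rewrite big_seq; apply: monic_prod => p /Ms /Mmonic. Qed.

End MultiplicativeSet.

Lemma Mstar_image_set (R R' : comNzRingType) (h : {rmorphism R -> R'})
    (M : {poly R} -> Prop) g :
  Mstar (image_set h M) g <-> exists f, Mstar M f /\ map_poly h f = g.
Proof.
split=> [[s [Ms ->]] | [f [[s [Ms ->]] <-]]].
  elim: s Ms => [|p s IHs] Ms.
    by exists 1; rewrite rmorph1 big_nil; split => //; apply: Mstar1.
  have [f0 [M0 ->]] : image_set h M p by apply: Ms; rewrite inE eqxx.
  have [|f [Mf fs]] := IHs; first by move=> q qs; apply: Ms; rewrite inE qs orbT.
  exists (f0 * f); rewrite big_cons -fs rmorphM; split => //.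
  exact/Mstar_mul/Mf/Mstar_mem.
exists (map (map_poly h) s); rewrite rmorph_prod big_map; split => // q /mapP [p ps ->].
by exists p; split => //; apply: Ms.
Qed.

Section CofinalChain.
Variables (R : comNzRingType) (M : {poly R} -> Prop).

Lemma at_most_countable_enum :
  at_most_countable M ->
  exists (e : {poly R} -> nat) (q : nat -> {poly R}),
    (forall j, Mstar M (q j)) /\ forall p, M p -> q (e p) = p.
Proof.
move=> [e e_inj]; exists e.
have [q qP] : exists q : nat -> {poly R},
    forall j, Mstar M (q j) /\ forall p, M p -> e p = j -> q j = p.
  apply: (choice (fun j q => Mstar M q /\ forall p, M p -> e p = j -> q = p)) => j.
  have [[p [Mp <-]]|noM] := classic (exists p, M p /\ e p = j).
    by exists p; split=> [|p' Mp' /e_inj]; [exact: Mstar_mem | move=> ->].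
  by exists 1; split=> [|p Mp ej]; [exact: Mstar1 | case: noM; exists p].
by exists q; split=> [j | p Mp]; [case: (qP j) | case: (qP (e p)) => _; apply].
Qed.

(* G_n is the product of the blocks indexed by CodeSeq.decode k, k < n; since
   decode enumerates all finite sequences of indices, every element of M*
   is one of the blocks. *)
Lemma exists_cofinal_chain :
  at_most_countable M ->
  exists G : nat -> {poly R},
    [/\ forall n, Mstar M (G n), forall n, pdivides (G n) (G n.+1)
      & forall f, Mstar M f -> exists n, pdivides f (G n)].
Proof.
move=> /at_most_countable_enum [e [q [Mq qK]]].
pose block k := \prod_(j <- CodeSeq.decode k) q j.
exists (fun n => \prod_(k < n) block k); split.
- by move=> n; do 2!apply: Mstar_prod => ?.
- by move=> n; exists (block n); rewrite big_ord_recr mulrC.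
move=> f [s [Ms ->]]; exists (CodeSeq.code (map e s)).+1.
exists (\prod_(k < CodeSeq.code (map e s)) block k); rewrite big_ord_recr /=.
rewrite /block CodeSeq.codeK big_map.
by congr (_ * _); apply: eq_big_seq => p /Ms /qK.
Qed.

End CofinalChain.

Section ModCompatible.
Variables (R : comNzRingType) (G : nat -> {poly R}).
Hypothesis G_monic : forall n, G n \is monic.

Definition mod_compatible (x : nat -> {poly R}) :=
  forall n, rmodp (x n.+1) (G n) = rmodp (x n) (G n).

Hypothesis G_dvd : forall n, pdivides (G n) (G n.+1).

Lemma pdivides_chain n k : pdivides (G n) (G (k + n)%N).
Proof.
elim: k => [|k IHk]; first by exists 1; rewrite mul1r.
exact: pdivides_trans IHk (G_dvd _).
Qed.

Lemma mod_compatible_chain x n k :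
  mod_compatible x -> rmodp (x (k + n)%N) (G n) = rmodp (x n) (G n).
Proof.
move=> x_compat; elim: k => // k IHk.
have Gn_dvd := pdivides_chain n k.
rewrite addSn -(rmodp_rmodp_pdivides _ (G_monic _) (G_monic n) Gn_dvd).
by rewrite x_compat rmodp_rmodp_pdivides.
Qed.

Lemma mod_compatible_pdivides x f n m :
  mod_compatible x -> f \is monic -> pdivides f (G n) -> pdivides f (G m) ->
  rmodp (x n) f = rmodp (x m) f.
Proof.
move=> x_compat mf; wlog le_nm : n m / (n <= m)%N => [wlog_le | fGn _].
  by case/orP: (leq_total n m) => le fGn fGm; [|symmetry]; apply: wlog_le.
rewrite -(subnK le_nm) -[RHS](rmodp_rmodp_pdivides _ (G_monic n) mf fGn).
by rewrite mod_compatible_chain // rmodp_rmodp_pdivides.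
Qed.

Lemma in_limit_mod_compatible (M : {poly R} -> Prop) x :
  in_limit M x -> (forall n, Mstar M (G n)) -> mod_compatible (fun n => x (G n)).
Proof.
move=> [_ [x_size x_compat]] MG n.
by rewrite x_compat // rmodp_small //; apply: x_size.
Qed.

End ModCompatible.

Section LiftAlongChain.
Variables (R R' : comNzRingType) (h : {rmorphism R -> R'}) (lift : R' -> R).
Hypothesis liftK : cancel lift h.
Variables (G : nat -> {poly R}) (y : nat -> {poly R'}).
Hypothesis G_monic : forall n, G n \is monic.
Hypothesis y_compat : mod_compatible (fun n => map_poly h (G n)) y.

(* The correction term rmodp x_n G_n - rmodp z G_n makes the lift agree with
   x_n modulo G_n, and h_q kills it because y is compatible. *)
Fixpoint lift_seq n : {poly R} :=
  if n is n'.+1 then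
    let z := map_poly lift (y n) in z + (rmodp (lift_seq n') (G n') - rmodp z (G n'))
  else map_poly lift (y 0).

Lemma map_lift_seq n : map_poly h (lift_seq n) = y n.
Proof.
elim: n => [|n IHn] /=; first exact: map_polyK.
rewrite rmorphD rmorphB /= !map_rmodp // IHn map_polyK //.
by rewrite y_compat subrr addr0.
Qed.

Lemma lift_seq_compatible : mod_compatible G lift_seq.
Proof. by move=> n /=; rewrite rmodpD // rmodpB // !rmodp_id // addrCA subrr addr0. Qed.

End LiftAlongChain.

Section FamilyOfChain.
Variables (R : comNzRingType) (M : {poly R} -> Prop) (G : nat -> {poly R}).
Hypothesis Mmonic : forall f, M f -> f \is monic.
Hypothesis MG : forall n, Mstar M (G n).
Hypothesis G_dvd : forall n, pdivides (G n) (G n.+1).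
Hypothesis G_cofinal : forall f, Mstar M f -> exists n, pdivides f (G n).
Variable x : nat -> {poly R}.
Hypothesis x_compat : mod_compatible G x.

Definition chain_family (f : {poly R}) : {poly R} :=
  if excluded_middle_informative (Mstar M f) is left _ then
    rmodp (x (epsilon (inhabits 0%N) (fun n => pdivides f (G n)))) f
  else 0.

Lemma chain_familyE f n :
  Mstar M f -> pdivides f (G n) -> chain_family f = rmodp (x n) f.
Proof.
move=> Mf fGn; rewrite /chain_family; case: excluded_middle_informative => // _.
have G_monic k := Mstar_monic Mmonic (MG k).
have fGe := epsilon_spec (inhabits 0%N) (fun k => pdivides f (G k)) (ex_intro _ n fGn).
exact: (mod_compatible_pdivides G_monic G_dvd x_compat (Mstar_monic Mmonic Mf) fGe fGn).
Qed.

Lemma chain_family_in_limit : in_limit M chain_family.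
Proof.
have monicM f : Mstar M f -> f \is monic := Mstar_monic Mmonic.
split; first by move=> f nMf; rewrite /chain_family; case: excluded_middle_informative.
split=> [f Mf | f g Mf Mg fg].
  have [n fGn] := G_cofinal Mf.
  by rewrite (chain_familyE Mf fGn); exact/ltn_rmodpN0/monic_neq0/monicM.
have [n gGn] := G_cofinal Mg.
rewrite (chain_familyE Mg gGn) (chain_familyE Mf (pdivides_trans fg gGn)).
exact: rmodp_rmodp_pdivides _ (monicM _ Mg) (monicM _ Mf) fg.
Qed.

End FamilyOfChain.

Section InducedMap.
Variables (R R' : comNzRingType) (h : {rmorphism R -> R'}) (M : {poly R} -> Prop).
Hypothesis Mmonic : forall f, M f -> f \is monic.

(* Any f' with h_q(f') = h_q(f) gives the same component: both f and f' divide
   f f', and h_q(x_f), h_q(x_f') are the reductions of h_q(x_(f f')). *)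
Lemma hM_map_poly x f :
  in_limit M x -> Mstar M f -> hM h M x (map_poly h f) = map_poly h (x f).
Proof.
move=> [_ [x_size x_compat]] Mf; rewrite /hM.
case: excluded_middle_informative => [ex_f'|[]]; last by exists f.
case: constructive_indefinite_description => f' [Mf' ff'] /=.
have mf' := Mstar_monic Mmonic Mf'.
have Mff' := Mstar_mul Mf Mf'.
have reduce g : Mstar M g -> pdivides g (f * f') ->
    map_poly h (x g) = rmodp (map_poly h (x (f * f'))) (map_poly h g).
  by move=> Mg gff'; rewrite -map_rmodp ?x_compat //; apply: Mstar_monic Mmonic Mg.
rewrite rmodp_small; last first.
  rewrite -ff' (size_map_poly_monic h mf').
  exact: leq_ltn_trans (size_map_poly_le _ _) (x_size _ Mf').
rewrite (reduce f' Mf'); last by exists f.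
by rewrite ff' -(reduce f Mf) //; exists f'; rewrite mulrC.
Qed.

Lemma hM_notin_image x g :
  ~ Mstar (image_set h M) g -> hM h M x g = 0.
Proof.
move=> nMg; rewrite /hM; case: excluded_middle_informative => // H.
by case: nMg; apply/Mstar_image_set.
Qed.

End InducedMap.

Theorem lemma3p1 (R R' : comNzRingType) (h : {rmorphism R -> R'})
    (M : {poly R} -> Prop)
    (Mmonic : forall f, M f -> f \is monic)
    (Mcount : at_most_countable M) :
  (injective h ->
     forall x1 x2, in_limit M x1 -> in_limit M x2 ->
       hM h M x1 = hM h M x2 -> x1 = x2) /\
  ((forall y : R', exists a : R, h a = y) ->
     forall y, in_limit (image_set h M) y ->
       exists x, in_limit M x /\ hM h M x = y).
Proof.
split=> [h_inj x1 x2 x1M x2M eq_hM | h_surj y yM].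
  apply: functional_extensionality => f.
  have [Mf|nMf] := classic (Mstar M f); last by rewrite x1M.1 ?x2M.1.
  apply: (map_inj_poly h_inj (rmorph0 h)).
  by rewrite -(hM_map_poly h Mmonic x1M Mf) -(hM_map_poly h Mmonic x2M Mf) eq_hM.
have [lift liftK] : exists lift : R' -> R, cancel lift h := choice _ h_surj.
have [G [MG G_dvd G_cofinal]] := exists_cofinal_chain Mcount.
have G_monic n : G n \is monic := Mstar_monic Mmonic (MG n).
have MhG n : Mstar (image_set h M) (map_poly h (G n)) by apply/Mstar_image_set; exists (G n).
pose yG n := y (map_poly h (G n)).
have yG_compat := in_limit_mod_compatible (fun n => pdivides_map h (G_dvd n)) yM MhG.
have x_compat := lift_seq_compatible lift yG G_monic.
have xM := chain_family_in_limit Mmonic MG G_dvd G_cofinal x_compat.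
exists (chain_family M G (lift_seq lift G yG)); split=> //.
apply: functional_extensionality => g.
have [/Mstar_image_set [f [Mf <-]]|nMg] := classic (Mstar (image_set h M) g); last first.
  by rewrite hM_notin_image // yM.1.
have [n fGn] := G_cofinal f Mf.
rewrite (hM_map_poly h Mmonic xM Mf) (chain_familyE Mmonic MG G_dvd x_compat Mf fGn).
rewrite map_rmodp ?(Mstar_monic Mmonic Mf) // (map_lift_seq liftK G_monic yG_compat).
apply: (yM.2.2 _ _ _ (MhG n) (pdivides_map h fGn)).
by apply/Mstar_image_set; exists f.
Qed.
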